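(* For every $h\in\mathcal H$, $T_h:A_h\to\mathcal Y_h$ is a bijection with inverse $S_h$. Moreover: (i) $1-h^\top y>0$ for every $y\in\mathcal Y_h$ (so $S_h$ is well defined on $\mathcal Y_h$); (ii) $S_h(\mathcal Y_h)\subseteq\mathcal X_d$ and $T_h(A_h)\subseteq\mathcal Y_h$; (iii) if $h$ lies in the interior of $\mathcal H$, then $A_h=\mathcal X_d$; (iv) if $h$ lies in the boundary of $\mathcal H$, then $\mathcal Y_h$ is unbounded.
   Context: Fix an integer $d\ge 2$. Let $H\in\mathbb R^{d\times(d-1)}$ have orthonormal columns spanning $T_d:=\{u\in\mathbb R^d:\mathbf 1^\top u=0\}$, and set $\gamma_i:=H^\top e_i\in\mathbb R^{d-1}$ ($i=1,\dots,d$); then $\sum_i\gamma_i=0$ and $\gamma_i^\top\gamma_j=\delta_{ij}-1/d$. Let $\mathcal X_d:=\{x\in\mathbb R^{d-1}:1+\gamma_i^\top x\ge0\ \forall i\}$ and $\mathcal H:=\mathrm{conv}\{\gamma_1,\dots,\gamma_d\}$. For $h\in\mathcal H$ define $A_h:=\{x\in\mathcal X_d:1+h^\top x>0\}$, $\mathcal Y_h:=\{y\in\mathbb R^{d-1}:1+(\gamma_i-h)^\top y\ge 0\ \forall i\}$, $T_h(x):=x/(1+h^\top x)$ for $x\in A_h$, and $S_h(y):=y/(1-h^\top y)$ for $y\in\mathcal Y_h$. *)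

From HB Require Import structures.
From mathcomp Require Import all_boot all_order all_algebra.
From mathcomp Require Import all_classical all_reals all_analysis.
Set Implicit Arguments. Unset Strict Implicit. Unset Printing Implicit Defensive.
Import Order.TTheory GRing.Theory Num.Theory.
Import numFieldNormedType.Exports.
Local Open Scope classical_set_scope.
Local Open Scope ring_scope.

Section Defs.
Variables (R : realType) (d : nat).
Notation V := 'cV[R]_(d.-1).

Definition dotv (u v : V) : R := (u^T *m v) 0 0.

Definition gamma (H : 'M[R]_(d, d.-1)) (i : 'I_d) : V :=
  H^T *m (delta_mx i 0 : 'cV[R]_d).

Definition Xd (H : 'M[R]_(d, d.-1)) : set V :=
  [set x | forall i, 0 <= 1 + dotv (gamma H i) x].

Definition Hconv (H : 'M[R]_(d, d.-1)) : set V :=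
  [set h | exists lam : 'I_d -> R, (forall i, 0 <= lam i) /\
     \sum_i lam i = 1 /\ h = \sum_i lam i *: gamma H i].

Definition Aset (H : 'M[R]_(d, d.-1)) (h : V) : set V :=
  [set x | Xd H x /\ 0 < 1 + dotv h x].

Definition Yset (H : 'M[R]_(d, d.-1)) (h : V) : set V :=
  [set y | forall i, 0 <= 1 + dotv (gamma H i - h) y].

Definition Tmap (h x : V) : V := (1 + dotv h x)^-1 *: x.
Definition Smap (h y : V) : V := (1 - dotv h y)^-1 *: y.

Definition bdry (A : set V) : set V := closure A `\` interior A.
End Defs.

From HB Require Import structures.
From mathcomp Require Import all_boot all_order all_algebra.
From mathcomp Require Import all_classical all_reals all_analysis.
From mathcomp Require Import ring lra.
Set Implicit Arguments. Unset Strict Implicit. Unset Printing Implicit Defensive.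
Import Order.TTheory GRing.Theory Num.Theory.
Import numFieldNormedType.Exports.
Local Open Scope classical_set_scope.
Local Open Scope ring_scope.

(* For h = sum_i lam_i gamma_i in the simplex, gamma_i.gamma_k = delta_ik - 1/d
   gives h.gamma_k = lam_k - 1/d, and 1 + h.x = sum_i lam_i (1 + gamma_i.x) is
   nonnegative on X_d.  The maps are handled by the identities
     1 + (gamma_i - h).T_h(x) = (1 + gamma_i.x) / (1 + h.x),
     1 - h.T_h(x) = 1 / (1 + h.x),      1 + h.S_h(y) = 1 / (1 - h.y),
   and 1 - h.y > 0 on Y_h because summing 1 + gamma_i.y - h.y >= 0 over i,
   with sum_i gamma_i = 0, leaves no room for h.y >= 1.
   If h is interior and 1 + h.x = 0 with x in X_d, then moving h slightly
   towards -x stays in the simplex but makes 1 + h.x negative.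
   If h is on the boundary, some lam_k vanishes, and then
   1 + (gamma_i - h).(t gamma_k) = 1 + t delta_ik, so the ray R_+ gamma_k
   lies in Y_h. *)

Section DotProduct.
Variables (R : realType) (d : nat).
Notation V := 'cV[R]_(d.-1).

Lemma dotvE (u v : V) : dotv u v = \sum_j u j 0 * v j 0.
Proof. by rewrite /dotv !mxE; apply: eq_bigr => j _; rewrite !mxE. Qed.

Lemma dotvC (u v : V) : dotv u v = dotv v u.
Proof. by rewrite !dotvE; apply: eq_bigr => j _; rewrite mulrC. Qed.

Lemma dotvDl (u v x : V) : dotv (u + v) x = dotv u x + dotv v x.
Proof. by rewrite !dotvE -big_split; apply: eq_bigr => j _; rewrite !mxE mulrDl. Qed.

Lemma dotvNl (u x : V) : dotv (- u) x = - dotv u x.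
Proof. by rewrite !dotvE -sumrN; apply: eq_bigr => j _; rewrite !mxE mulNr. Qed.

Lemma dotvBl (u v x : V) : dotv (u - v) x = dotv u x - dotv v x.
Proof. by rewrite dotvDl dotvNl. Qed.

Lemma dotvZl a (u x : V) : dotv (a *: u) x = a * dotv u x.
Proof. by rewrite !dotvE mulr_sumr; apply: eq_bigr => j _; rewrite !mxE mulrA. Qed.

Lemma dotvZr a (u x : V) : dotv u (a *: x) = a * dotv u x.
Proof. by rewrite dotvC dotvZl dotvC. Qed.

Lemma dotv_suml (I : finType) (F : I -> V) x :
  dotv (\sum_i F i) x = \sum_i dotv (F i) x.
Proof.
rewrite dotvE; under eq_bigr do rewrite summxE mulr_suml.
by rewrite exchange_big /=; apply: eq_bigr => i _; rewrite dotvE.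
Qed.

Lemma dotv0r (u : V) : dotv u 0 = 0.
Proof. by rewrite dotvE big1 // => j _; rewrite mxE mulr0. Qed.

Lemma dotvv_gt0 (x : V) : x != 0 -> 0 < dotv x x.
Proof.
move=> x0; have sq_ge0 j : 0 <= x j 0 * x j 0 by rewrite -expr2 sqr_ge0.
rewrite lt_neqAle dotvE sumr_ge0 // andbT eq_sym psumr_eq0 //.
apply: contra x0 => /allP x0; apply/eqP/matrixP => j b; rewrite (ord1 b) mxE.
by have := x0 j (mem_index_enum _); rewrite mulf_eq0 orbb => /eqP.
Qed.

End DotProduct.

Lemma ler_entry_mx_norm (R : realType) m n (A : 'M[R]_(m, n)) i j :
  `|A i j| <= `|A|.
Proof.
by rewrite [leRHS]/Num.Def.normr /= mx_normrE; apply/bigmax_geP; right; exists (i, j).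
Qed.

Lemma ler_norm_mulmx_col (R : realType) m n (A : 'M[R]_(m, n)) (v : 'cV_n) i :
  `|(A *m v) i 0| <= (\sum_j `|A i j|) * `|v|.
Proof.
rewrite mxE mulr_suml; apply: le_trans (ler_norm_sum _ _ _) _.
apply: ler_sum => j _; rewrite normrM ler_wpM2l //; exact: ler_entry_mx_norm.
Qed.

Section ProjectiveMaps.
Variables (R : realType) (d : nat) (H : 'M[R]_(d, d.-1)) (h : 'cV[R]_(d.-1)).

Lemma dotv_Tmap x : 1 + dotv h x != 0 -> 1 - dotv h (Tmap h x) = (1 + dotv h x)^-1.
Proof. by move=> nz; rewrite /Tmap dotvZr; field. Qed.

Lemma dotv_Smap y : 1 - dotv h y != 0 -> 1 + dotv h (Smap h y) = (1 - dotv h y)^-1.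
Proof. by move=> nz; rewrite /Smap dotvZr; field. Qed.

Lemma TmapK x : 1 + dotv h x != 0 -> Smap h (Tmap h x) = x.
Proof. by move=> nz; rewrite /Smap dotv_Tmap // invrK /Tmap scalerA mulfV ?scale1r. Qed.

Lemma SmapK y : 1 - dotv h y != 0 -> Tmap h (Smap h y) = y.
Proof. by move=> nz; rewrite /Tmap dotv_Smap // invrK /Smap scalerA mulfV ?scale1r. Qed.

Lemma Tmap_Yset x : Aset H h x -> Yset H h (Tmap h x).
Proof.
move=> [Xx hx] i; have nz : 1 + dotv h x != 0 by rewrite gt_eqF.
have -> : 1 + dotv (gamma H i - h) (Tmap h x) = (1 + dotv (gamma H i) x) / (1 + dotv h x).
  by rewrite /Tmap dotvZr dotvBl; field.
by apply: divr_ge0; [exact: Xx | exact: ltW].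
Qed.

Lemma Smap_Aset y : Yset H h y -> 0 < 1 - dotv h y -> Aset H h (Smap h y).
Proof.
move=> Yy hy; have nz : 1 - dotv h y != 0 by rewrite gt_eqF.
split; last by rewrite dotv_Smap // invr_gt0.
move=> i; have -> : 1 + dotv (gamma H i) (Smap h y) = (1 + dotv (gamma H i - h) y) / (1 - dotv h y).
  by rewrite /Smap dotvZr dotvBl; field.
by apply: divr_ge0; [exact: Yy | exact: ltW].
Qed.

End ProjectiveMaps.

Section Simplex.
Variables (R : realType) (d : nat) (H : 'M[R]_(d, d.-1)).
Hypothesis d_ge2 : (2 <= d)%N.
Hypothesis HtH : H^T *m H = 1%:M.
Hypothesis rangeH : forall u : 'cV[R]_d,
  ((const_mx 1 : 'cV[R]_d)^T *m u = 0) <-> exists c : 'cV[R]_(d.-1), u = H *m c.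
Notation V := 'cV[R]_(d.-1).

Lemma gammaE i a b : gamma H i a b = H i a.
Proof. by rewrite /gamma -trmx_delta -trmx_mul -rowE !mxE. Qed.

Lemma dotv_gamma i (x : V) : dotv (gamma H i) x = (H *m x) i 0.
Proof. by rewrite dotvE mxE; apply: eq_bigr => j _; rewrite gammaE. Qed.

Lemma trmx_mulmx_col (v : 'cV[R]_d) : H^T *m v = \sum_i v i 0 *: gamma H i.
Proof.
apply/matrixP => a b; rewrite summxE [LHS]mxE; apply: eq_bigr => i _.
by rewrite mxE [RHS]mxE gammaE (ord1 b) mulrC.
Qed.

Lemma sum_col_mulmx (x : V) : \sum_i (H *m x) i 0 = 0.
Proof.
have /matrixP/(_ 0 0) centred := (rangeH (H *m x)).2 (ex_intro _ x erefl).
rewrite mxE [RHS]mxE in centred; apply: etrans centred.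
by apply: eq_bigr => j _; rewrite !mxE mul1r.
Qed.

Lemma sum_dotv_gamma (y : V) : \sum_i dotv (gamma H i) y = 0.
Proof. by apply: etrans (sum_col_mulmx y); apply: eq_bigr => i _; rewrite dotv_gamma. Qed.

Lemma trmx_mul_const1 : H^T *m (const_mx 1 : 'cV[R]_d) = 0.
Proof.
apply/matrixP => a b; rewrite !mxE; apply: etrans (sum_col_mulmx (delta_mx a 0)).
by apply: eq_bigr => i _; rewrite -colE !mxE mulr1.
Qed.

Lemma sum_gamma : \sum_i gamma H i = 0.
Proof.
apply: etrans trmx_mul_const1; rewrite trmx_mulmx_col.
by apply: eq_bigr => i _; rewrite mxE scale1r.
Qed.

Lemma sum_inv_d : \sum_(i < d) (d%:R : R)^-1 = 1.
Proof. by rewrite sumr_const card_ord -[_ *+ d]mulr_natr mulVf // pnatr_eq0 -lt0n (leq_trans _ d_ge2). Qed.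

(* e_i - 1/d is centred, hence equals H c; as H^T H = 1 this forces
   gamma_i = H^T e_i = c, so H gamma_i = e_i - 1/d. *)
Lemma dotv_gamma_gamma k i : dotv (gamma H k) (gamma H i) = (k == i)%:R - (d%:R)^-1.
Proof.
set w : 'cV[R]_d := delta_mx i 0 - (d%:R)^-1 *: const_mx 1.
have w_centred : (const_mx 1 : 'cV[R]_d)^T *m w = 0.
  apply/matrixP => a b; rewrite (ord1 a) (ord1 b) !mxE.
  under eq_bigr do rewrite !mxE mul1r mulr1 andbT.
  rewrite sumrB sum_inv_d (bigD1 i) //= eqxx big1 ?addr0 ?subrr //.
  by move=> j /negbTE ->.
have [c wE] := (rangeH w).1 w_centred.
have gamma_i : gamma H i = c.
  rewrite /gamma -[delta_mx i 0](subrK ((d%:R)^-1 *: const_mx 1)) -/w.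
  by rewrite mulmxDr -scalemxAr trmx_mul_const1 scaler0 addr0 wE mulmxA HtH mul1mx.
by rewrite dotv_gamma gamma_i -wE /w !mxE eqxx andbT mulr1.
Qed.

Lemma gamma_neq0 k : gamma H k != 0.
Proof.
have inv_d_lt1 : (d%:R : R)^-1 < 1 by rewrite invf_lt1 ?ltr0n ?ltr1n // (leq_trans _ d_ge2).
apply/eqP => gamma_k0; have := dotv_gamma_gamma k k.
by rewrite gamma_k0 dotv0r eqxx mulr1n; lra.
Qed.

Lemma mulmx_conv_coord lam k : \sum_i lam i = 1 ->
  (H *m (\sum_i lam i *: gamma H i)) k 0 = lam k - (d%:R)^-1.
Proof.
move=> lam1; rewrite -dotv_gamma dotvC dotv_suml.
under eq_bigr do rewrite dotvZl dotvC dotv_gamma_gamma mulrBr.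
rewrite sumrB -mulr_suml lam1 mul1r (bigD1 k) //= eqxx mulr1 big1 ?addr0 //.
by move=> j; rewrite eq_sym => /negbTE ->; rewrite mulr0.
Qed.

Lemma Hconv_of_coord (h : V) : (forall i, 0 <= (d%:R)^-1 + (H *m h) i 0) -> Hconv H h.
Proof.
move=> h_ge; exists (fun i => (d%:R)^-1 + (H *m h) i 0); split => //; split.
  by rewrite big_split /= sum_col_mulmx addr0 sum_inv_d.
under eq_bigr do rewrite scalerDl.
rewrite big_split /= -scaler_sumr sum_gamma scaler0 add0r.
by rewrite -trmx_mulmx_col mulmxA HtH mul1mx.
Qed.

Lemma dotv_conv lam (x : V) : \sum_i lam i = 1 ->
  1 + dotv (\sum_i lam i *: gamma H i) x = \sum_i lam i * (1 + dotv (gamma H i) x).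
Proof.
move=> lam1; rewrite dotv_suml; under [RHS]eq_bigr do rewrite mulrDr mulr1.
by rewrite big_split /= lam1; congr (_ + _); apply: eq_bigr => i _; rewrite dotvZl.
Qed.

Lemma Hconv_dotv_ge0 h x : Hconv H h -> Xd H x -> 0 <= 1 + dotv h x.
Proof.
move=> [lam [lam_ge0 [lam1 ->]]] Xx.
by rewrite dotv_conv // sumr_ge0 // => i _; rewrite mulr_ge0.
Qed.

Lemma Yset_dotv_lt1 h y : Hconv H h -> Yset H h y -> 0 < 1 - dotv h y.
Proof.
move=> [lam [lam_ge0 [lam1 hE]]] Yy; rewrite ltNge; apply/negP => hy.
have gamma_y_ge0 i : 0 <= dotv (gamma H i) y by have := Yy i; rewrite dotvBl; lra.
have gamma_y0 i : dotv (gamma H i) y = 0.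
  have /eqP := sum_dotv_gamma y.
  by rewrite psumr_eq0 // => /allP/(_ i (mem_index_enum _))/eqP.
move: hy; rewrite hE dotv_suml big1 ?subr0 ?ler10 // => i _.
by rewrite dotvZl gamma_y0 mulr0.
Qed.

Lemma Aset_interior h : interior (Hconv H) h -> Aset H h = Xd H.
Proof.
move=> h_int; have /nbhs_normP[e /= e_gt0 ball_conv] := h_int.
apply/seteqP; split => [x [] //|x Xx]; split => //.
rewrite lt_neqAle Hconv_dotv_ge0 ?andbT //; last exact: nbhs_singleton.
apply/eqP => /esym hx0.
have x_neq0 : x != 0.
  by apply/eqP => x0; move: hx0; rewrite x0 dotv0r addr0 => /eqP; rewrite oner_eq0.
have xx_gt0 : 0 < dotv x x := dotvv_gt0 x_neq0.
have nx_ge0 : 0 <= `|x| := normr_ge0 x.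
set eps := e / 2 / (`|x| + 1).
have eps_gt0 : 0 < eps by rewrite !divr_gt0 //; lra.
have epsE : eps * (`|x| + 1) = e / 2 by rewrite /eps; field; lra.
have : ball_ (fun v => `|v|) h e (h - eps *: x).
  by rewrite /ball_ /= opprB addrC subrK normrZ gtr0_norm //; nra.
move=> /ball_conv/Hconv_dotv_ge0/(_ Xx); rewrite dotvBl dotvZl; nra.
Qed.

Lemma Hconv_interior lam : (forall i, 0 < lam i) -> \sum_i lam i = 1 ->
  interior (Hconv H) (\sum_i lam i *: gamma H i).
Proof.
move=> lam_gt0 lam1; set h := \sum_i _.
have near_coord i : \forall h' \near h, 0 <= (d%:R)^-1 + (H *m h') i 0.
  apply/nbhs_normP; set C := \sum_j `|H i j| + 1.
  have sum_le_C : \sum_j `|H i j| <= C by rewrite lerDl.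
  have C_gt0 : 0 < C by rewrite /C ltr_wpDl ?sumr_ge0.
  exists (lam i / C) => [|h' /= hh']; first by rewrite /= divr_gt0.
  have -> : (H *m h') i 0 = (H *m h) i 0 - (H *m (h - h')) i 0.
    by rewrite mulmxBr !mxE opprB addrC subrK.
  have : `|(H *m (h - h')) i 0| < lam i.
    apply: le_lt_trans (ler_norm_mulmx_col H (h - h') i) _.
    apply: le_lt_trans (ler_wpM2r (normr_ge0 _) sum_le_C) _.
    by rewrite mulrC -ltr_pdivlMr.
  by rewrite mulmx_conv_coord // => /ltr_normlW; lra.
have := filter_forall (nbhs_filter h) near_coord.
by apply: filterS => h' h'_ge0; exact: Hconv_of_coord.
Qed.

Lemma Yset_ray lam k t : \sum_i lam i = 1 -> lam k = 0 -> 0 <= t ->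
  Yset H (\sum_i lam i *: gamma H i) (t *: gamma H k).
Proof.
move=> lam1 lam_k0 t_ge0 i.
rewrite dotvZr dotvBl dotv_gamma_gamma [dotv (\sum_i _) _]dotvC dotv_gamma.
by rewrite mulmx_conv_coord // lam_k0 sub0r opprK subrK addr_ge0 ?mulr_ge0.
Qed.

End Simplex.

Lemma ray_not_bounded (R : realType) (V : normedModType R) (A : set V) v :
  v != 0 -> (forall t, 0 <= t -> A (t *: v)) -> ~ bounded_set A.
Proof.
move=> v_neq0 ray_in [M [_ A_le]].
have v_gt0 : 0 < `|v| by rewrite normr_gt0.
set t := (`|M| + 2) / `|v|.
have t_ge0 : 0 <= t by rewrite divr_ge0 // addr_ge0.
have M_lt : M < M + 1 by rewrite ltrDl.
have := A_le (M + 1) M_lt _ (ray_in t t_ge0).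
rewrite /= normrZ ger0_norm // /t divfK ?gt_eqF //.
by have := ler_norm M; lra.
Qed.

Theorem proposition3p2 (R : realType) (d : nat) (H : 'M[R]_(d, d.-1)) :
  (2 <= d)%N ->
  H^T *m H = 1%:M ->
  (forall u : 'cV[R]_d,
      ((const_mx 1 : 'cV[R]_d)^T *m u = 0) <-> exists c : 'cV[R]_(d.-1), u = H *m c) ->
  forall h : 'cV[R]_(d.-1), Hconv H h ->
  [/\ ((forall x, Aset H h x -> Yset H h (Tmap h x) /\ Smap h (Tmap h x) = x) /\
       (forall y, Yset H h y -> Aset H h (Smap h y) /\ Tmap h (Smap h y) = y)),
      (forall y, Yset H h y -> 0 < 1 - dotv h y),
      (Smap h @` Yset H h `<=` Xd H /\ Tmap h @` Aset H h `<=` Yset H h),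
      (interior (Hconv H) h -> Aset H h = Xd H) &
      (bdry (Hconv H) h -> ~ bounded_set (Yset H h))].
Proof.
move=> d_ge2 HtH rangeH h h_conv.
have h_lt1 y : Yset H h y -> 0 < 1 - dotv h y := Yset_dotv_lt1 rangeH h_conv.
have T_bij x : Aset H h x -> Yset H h (Tmap h x) /\ Smap h (Tmap h x) = x.
  by move=> Ax; split; [exact: Tmap_Yset | apply: TmapK; rewrite gt_eqF //; case: Ax].
have S_bij y : Yset H h y -> Aset H h (Smap h y) /\ Tmap h (Smap h y) = y.
  by move=> Yy; split; [exact: Smap_Aset (h_lt1 y Yy) | rewrite SmapK ?gt_eqF ?h_lt1].
split=> //.
- by split=> _ [z Hz <-]; [case: (S_bij z Hz) => -[] | case: (T_bij z Hz)].
- exact: Aset_interior.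
- move=> [_ h_not_int]; have [lam [lam_ge0 [lam1 hE]]] := h_conv.
  have [k lam_k0] : exists k, lam k = 0.
    apply: contrapT => no_zero; apply: h_not_int; rewrite hE.
    apply: (Hconv_interior d_ge2 HtH rangeH) => // i; rewrite lt_neqAle lam_ge0 andbT eq_sym.
    by apply/eqP => lam_i0; apply: no_zero; exists i.
  rewrite hE; apply: (ray_not_bounded (gamma_neq0 d_ge2 HtH rangeH k)) => t t_ge0.
  exact: Yset_ray.
Qed.
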